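(* Consider the P-SSD algorithm described in the context, executed over an arbitrary, possibly time-varying, sequence of digraphs $\{G_k\}_{k\ge1}$. Then at each iteration $k\in\mathbb{N}$, $\mathcal{R}(C_k^i)\subseteq\mathcal{R}(C_{k-1}^j)$ for all $i\in\{1,\dots,M\}$ and all $j\in\{i\}\cup\mathcal{N}_{\mathrm{in}}^k(i)$.
   Context: Data setting: a map $T:\mathcal{M}\to\mathcal{M}$, $\mathcal{M}\subseteq\mathbb{R}^n$; a dictionary $D(x)=[d_1(x),\dots,d_{N_d}(x)]$ of real-valued functions on $\mathcal{M}$; data matrices $X,Y\in\mathbb{R}^{N\times n}$ whose $i$-th rows $x_i^T,y_i^T$ satisfy $y_i=T(x_i)$; $D(X)\in\mathbb{R}^{N\times N_d}$ is the matrix with rows $D(x_1),\dots,D(x_N)$ (similarly $D(Y)$). Assumption: $D(X)$ and $D(Y)$ have full column rank. There are $M$ agents; agent $i$ holds local dictionary snapshots $D(X_i),D(Y_i)$ (obtained from a subset of the snapshot pairs) such that the union over $i$ of the rows of $[D(X_i),D(Y_i)]$ equals the set of rows of $[D(X),D(Y)]$. There are signature matrices $D(X_s),D(Y_s)$ with full column rank such that the rows of $[D(X_s),D(Y_s)]$ are contained in the rows of $[D(X_i),D(Y_i)]$ for every $i$. SSD algorithm: given $A,B\in\mathbb{R}^{m\times q}$, set $A_1=A$, $B_1=B$, $C=I_q$, and iterate: let $[Z^A_j;Z^B_j]$ be a matrix whose columns form a basis of the null space of $[A_j,B_j]$ (with $Z^A_j$ having as many rows as $A_j$ has columns); if the null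 space is trivial return $0$; if the number of rows of $Z^A_j$ is at most its number of columns, return $C$; otherwise set $C\leftarrow CZ^A_j$, $A_{j+1}=A_jZ^A_j$, $B_{j+1}=B_jZ^A_j$. Its output is denoted $\mathrm{SSD}(A,B)$. P-SSD algorithm: at iteration $k\ge1$ the digraph $G_k$ is used; an edge $(j,i)\in E_k$ means $j$ is an in-neighbor of $i$, and $\mathcal{N}_{\mathrm{in}}^k(i)$ denotes the in-neighbors of $i$ in $G_k$. Each agent $i$ sets $C_0^i=I_{N_d}$, $\mathrm{flag}_0^i=0$, and for $k=1,2,\dots$: receives $C_{k-1}^j$ for $j\in\mathcal{N}_{\mathrm{in}}^k(i)$; sets $D_k^i=\mathrm{basis}\big(\bigcap_{j\in\{i\}\cup\mathcal{N}_{\mathrm{in}}^k(i)}\mathcal{R}(C_{k-1}^j)\big)$; sets $E_k^i=\mathrm{SSD}(D(X_i)D_k^i,D(Y_i)D_k^i)$; if the number of columns of $D_k^iE_k^i$ is strictly less than that of $C_{k-1}^i$, sets $C_k^i=D_k^iE_k^i$ and $\mathrm{flag}_k^i=0$; otherwise sets $C_k^i=C_{k-1}^i$ and $\mathrm{flag}_k^i=1$; then transmits $C_k^i$ to its out-neighbors. Here $\mathrm{basis}(\mathcal{A})$ returns a matrix whose columns form a basis of the subspace $\mathcal{A}$, and returns $0$ if $\mathcal{A}=\{0\}$; the matrix $0$ is regarded as having $0$ columns. $\mathcal{R}(\cdot)$ denotes range space. *)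

From HB Require Import structures.
From mathcomp Require Import all_boot all_order all_algebra.
From mathcomp Require Export reals.
Set Implicit Arguments. Unset Strict Implicit. Unset Printing Implicit Defensive.
Import Order.TTheory GRing.Theory Num.Theory.
Local Open Scope ring_scope.

(* Matrices act on column vectors; the range space R(A) of A : 'M_(n,c) is the
   column space of A, i.e. the MathComp row space of A^T. *)

Section Defs.
Variable R : fieldType.

Definition in_range (n c : nat) (v : 'cV[R]_n) (A : 'M[R]_(n, c)) : bool :=
  (v^T <= A^T)%MS.

Definition range_sub (n a b : nat) (A : 'M[R]_(n, a)) (B : 'M[R]_(n, b)) : bool :=
  (A^T <= B^T)%MS.

Definition is_null_basis (m k p : nat) (M : 'M[R]_(m, k)) (Z : 'M[R]_(k, p)) : Prop :=
  \rank Z = p /\ forall v : 'cV[R]_k, (M *m v == 0) = in_range v Z.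

Definition dict_rows (n Nd N p : nat) (d : 'rV[R]_n -> 'rV[R]_Nd)
  (X : 'M[R]_(N, n)) (f : 'I_p -> 'I_N) : 'M[R]_(p, Nd) :=
  \matrix_(r < p) d (row (f r) X).

Definition dict_mx (n Nd N : nat) (d : 'rV[R]_n -> 'rV[R]_Nd) (X : 'M[R]_(N, n))
  : 'M[R]_(N, Nd) := dict_rows d X id.

(* One run of the SSD algorithm (basis choices are arbitrary).
   SSD_run A_j B_j C c C_out : starting from the current state (A_j, B_j, C),
   the algorithm returns C_out (with c columns). *)
Inductive SSD_run (m q : nat) :
  forall qj : nat, 'M[R]_(m, qj) -> 'M[R]_(m, qj) -> 'M[R]_(q, qj) ->
  forall c : nat, 'M[R]_(q, c) -> Prop :=
| SSD_zero qj p (Aj Bj : 'M[R]_(m, qj)) (Cj : 'M[R]_(q, qj)) (Z : 'M[R]_(qj + qj, p)) :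
    is_null_basis (row_mx Aj Bj) Z -> p = 0%N ->
    SSD_run Aj Bj Cj (0 : 'M[R]_(q, 0))
| SSD_stop qj p (Aj Bj : 'M[R]_(m, qj)) (Cj : 'M[R]_(q, qj)) (Z : 'M[R]_(qj + qj, p)) :
    is_null_basis (row_mx Aj Bj) Z -> p <> 0%N -> (qj <= p)%N ->
    SSD_run Aj Bj Cj Cj
| SSD_step qj p (Aj Bj : 'M[R]_(m, qj)) (Cj : 'M[R]_(q, qj)) (Z : 'M[R]_(qj + qj, p))
    c (Cout : 'M[R]_(q, c)) :
    is_null_basis (row_mx Aj Bj) Z -> p <> 0%N -> (p < qj)%N ->
    SSD_run (Aj *m usubmx Z) (Bj *m usubmx Z) (Cj *m usubmx Z) Cout ->
    SSD_run Aj Bj Cj Cout.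

Definition SSD_out (m q c : nat) (A B : 'M[R]_(m, q)) (C : 'M[R]_(q, c)) : Prop :=
  SSD_run A B (1%:M : 'M[R]_(q, q)) C.

(* The columns of Dk form a basis of the intersection of R(C_j) over
   j in {i} \cup N_in(i) for the digraph Gk (Gk j i = edge (j,i)).
   If the intersection is {0}, Dk has 0 columns. *)
Definition is_cap_basis (M Nd d : nat) (Gk : rel 'I_M)
  (Cprev : 'I_M -> {c : nat & 'M[R]_(Nd, c)}) (i : 'I_M) (Dk : 'M[R]_(Nd, d)) : Prop :=
  \rank Dk = d /\
  forall v : 'cV[R]_Nd,
    in_range v Dk <-> (forall j : 'I_M, (j == i) || Gk j i -> in_range v (projT2 (Cprev j))).

(* One iteration k of P-SSD at agent i: Cprev = (C_{k-1}^j)_j, Cnew = C_k^i,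
   DXi, DYi the local dictionary snapshots of agent i. (Flags omitted:
   they do not influence the matrices C_k^i.) *)
Definition PSSD_step (M Nd Ni : nat) (DXi DYi : 'M[R]_(Ni, Nd)) (Gk : rel 'I_M)
  (Cprev : 'I_M -> {c : nat & 'M[R]_(Nd, c)}) (i : 'I_M)
  (Cnew : {c : nat & 'M[R]_(Nd, c)}) : Prop :=
  exists (d : nat) (Dk : 'M[R]_(Nd, d)),
    is_cap_basis Gk Cprev i Dk /\
    exists (e : nat) (E : 'M[R]_(d, e)),
      SSD_out (DXi *m Dk) (DYi *m Dk) E /\
      Cnew = (if (e < projT1 (Cprev i))%N
              then existT (fun c => 'M[R]_(Nd, c)) e (Dk *m E)
              else Cprev i).

End Defs.

(* Every output of SSD on a pair (A, B) with B of full column rank again has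
   full column rank: if the columns of [Z_A; Z_B] span the null space of
   [A, B], then B Z_B = - A Z_A, so Z_A v = 0 forces Z v = 0, i.e. v = 0.
   The local snapshot D(Y_i) contains the rows of the signature D(Y_s), hence
   has full column rank, and so do D(Y_i) D_k^i and D_k^i E_k^i.
   If agent i updates, R(C_k^i) = R(D_k^i E_k^i) is inside R(D_k^i), which is
   inside every R(C_{k-1}^j).  If it does not, D_k^i E_k^i has at least as many
   columns, hence at least the rank, of C_{k-1}^i while its range lies in
   R(C_{k-1}^i); the two ranges therefore coincide and the same inclusion
   holds. *)

From HB Require Import structures.
From mathcomp Require Import all_boot all_order all_algebra reals.
Import Order.TTheory GRing.Theory Num.Theory.
Local Open Scope ring_scope.
Set Implicit Arguments. Unset Strict Implicit.

Section FullColumnRank.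
Variable F : fieldType.

Definition col_free m n (A : 'M[F]_(m, n)) := row_free A^T.

Lemma col_free_rank m n (A : 'M[F]_(m, n)) : col_free A = (\rank A == n).
Proof. by rewrite /col_free /row_free mxrank_tr. Qed.

Lemma col_freeP m n (A : 'M[F]_(m, n)) :
  reflect (forall v : 'cV_n, A *m v = 0 -> v = 0) (col_free A).
Proof.
apply: (iffP idP) => [freeA v Av0 | injA].
  apply: trmx_inj; apply/eqP.
  by rewrite trmx0 -(mulmx_free_eq0 _ freeA) -trmx_mul Av0 trmx0.
apply: inj_row_free => v vA0; apply: trmx_inj; rewrite trmx0.
by apply: injA; rewrite -[A]trmxK -trmx_mul vA0 trmx0.
Qed.

Lemma col_freeM m n p (A : 'M[F]_(m, n)) (B : 'M[F]_(n, p)) :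
  col_free A -> col_free B -> col_free (A *m B).
Proof.
move=> /col_freeP injA /col_freeP injB; apply/col_freeP => v.
by rewrite -mulmxA => /injA /injB.
Qed.

Lemma col_free1 n : col_free (1%:M : 'M[F]_n).
Proof. by apply/col_freeP => v; rewrite mul1mx. Qed.

Lemma col_free_thin m (A : 'M[F]_(m, 0)) : col_free A.
Proof. by apply/col_freeP => v _; rewrite flatmx0. Qed.

Lemma col_free_of_rows m p n (A : 'M[F]_(m, n)) (B : 'M[F]_(p, n)) :
  (forall r, exists r', row r' A = row r B) -> col_free B -> col_free A.
Proof.
move=> rowsB /col_freeP injB; apply/col_freeP => v Av0; apply: injB.
apply/row_matrixP => r; have [r' rowr'] := rowsB r.
by rewrite row0 row_mul -rowr' -row_mul Av0 row0.
Qed.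

Lemma null_basis_usub_col_free m q p (A B : 'M[F]_(m, q)) (Z : 'M[F]_(q + q, p)) :
  is_null_basis (row_mx A B) Z -> col_free B -> col_free (usubmx Z).
Proof.
move=> [rankZ nullZ] /col_freeP injB; apply/col_freeP => v Zu_v0.
have /col_freeP injZ : col_free Z by rewrite col_free_rank rankZ.
have /eqP : row_mx A B *m (Z *m v) == 0.
  by rewrite nullZ /in_range trmx_mul submxMl.
rewrite -{1}(vsubmxK Z) mul_col_mx mul_row_col Zu_v0 mulmx0 add0r.
move=> /injB Zd_v0; apply: injZ.
by rewrite -(vsubmxK Z) mul_col_mx Zu_v0 Zd_v0 col_mx0.
Qed.

Lemma SSD_run_col_free m q qj (A B : 'M[F]_(m, qj)) (C : 'M[F]_(q, qj)) c
    (Cout : 'M[F]_(q, c)) :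
  SSD_run A B C Cout -> col_free B -> col_free C -> col_free Cout.
Proof.
elim=> {qj A B C c Cout} [*|//|qj p A B C Z c Cout nullZ _ _ _ IH freeB freeC].
  exact: col_free_thin.
have freeZu := null_basis_usub_col_free nullZ freeB.
by apply: IH; apply: col_freeM.
Qed.

Lemma SSD_out_col_free m q c (A B : 'M[F]_(m, q)) (C : 'M[F]_(q, c)) :
  SSD_out A B C -> col_free B -> col_free C.
Proof. by move=> ssdC freeB; apply: (SSD_run_col_free ssdC freeB (col_free1 _)). Qed.

End FullColumnRank.

Section RangeInclusion.
Variable F : fieldType.

Lemma range_sub_trans n a b c (A : 'M[F]_(n, a)) (B : 'M[F]_(n, b))
    (C : 'M[F]_(n, c)) :
  range_sub A B -> range_sub B C -> range_sub A C.
Proof. exact: submx_trans. Qed.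

Lemma range_sub_mulmxr n a b (A : 'M[F]_(n, a)) (B : 'M[F]_(a, b)) :
  range_sub (A *m B) A.
Proof. by rewrite /range_sub trmx_mul submxMl. Qed.

Lemma range_sub_rank_sym n a b (A : 'M[F]_(n, a)) (B : 'M[F]_(n, b)) :
  range_sub A B -> (b <= \rank A)%N -> range_sub B A.
Proof.
move=> subAB le_b_rA; rewrite /range_sub -(geq_leqif (mxrank_leqif_sup subAB)).
by rewrite !mxrank_tr (leq_trans (rank_leq_col B) le_b_rA).
Qed.

Lemma cap_basis_range_sub M Nd d (Gk : rel 'I_M)
    (Cprev : 'I_M -> {c : nat & 'M[F]_(Nd, c)}) (i j : 'I_M) (D : 'M[F]_(Nd, d)) :
  is_cap_basis Gk Cprev i D -> (j == i) || Gk j i ->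
  range_sub D (projT2 (Cprev j)).
Proof.
move=> [_ capD] ij; apply/row_subP => r; rewrite -tr_col.
by apply: (capD _).1 ij; rewrite /in_range tr_col row_sub.
Qed.

Lemma PSSD_step_range_sub M Nd Ni (DXi DYi : 'M[F]_(Ni, Nd)) (Gk : rel 'I_M)
    (Cprev : 'I_M -> {c : nat & 'M[F]_(Nd, c)}) (i j : 'I_M)
    (Cnew : {c : nat & 'M[F]_(Nd, c)}) :
  col_free DYi -> PSSD_step DXi DYi Gk Cprev i Cnew -> (j == i) || Gk j i ->
  range_sub (projT2 Cnew) (projT2 (Cprev j)).
Proof.
move=> freeDYi [d [D [capD [e [E [ssdE ->]]]]]] ij.
have D_sub_j := cap_basis_range_sub capD ij.
have DE_sub_j := range_sub_trans (range_sub_mulmxr D E) D_sub_j.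
case: ifP => [//|/negbT]; rewrite -leqNgt => le_ci_e /=.
have freeD : col_free D by rewrite col_free_rank; case: capD => ->.
have freeDE : col_free (D *m E).
  by apply/col_freeM/(SSD_out_col_free ssdE)/col_freeM.
have ii : (i == i) || Gk i i by rewrite eqxx.
have DE_sub_i := range_sub_trans (range_sub_mulmxr D E) (cap_basis_range_sub capD ii).
apply: range_sub_trans DE_sub_j; apply: range_sub_rank_sym DE_sub_i _.
by move: freeDE; rewrite col_free_rank => /eqP ->.
Qed.

End RangeInclusion.

Theorem lemma4p7 (R : realType) (n Nd N M : nat)
  (Mset : 'rV[R]_n -> Prop) (T : 'rV[R]_n -> 'rV[R]_n)
  (d : 'rV[R]_n -> 'rV[R]_Nd) (X Y : 'M[R]_(N, n))
  (Ni : 'I_M -> nat) (idx : forall i : 'I_M, 'I_(Ni i) -> 'I_N)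
  (Ns : nat) (DXs DYs : 'M[R]_(Ns, Nd))
  (G : nat -> rel 'I_M)
  (C : nat -> 'I_M -> {c : nat & 'M[R]_(Nd, c)}) :
  (* data: T maps the set M to itself, x_l in M and y_l = T(x_l) *)
  (forall x, Mset x -> Mset (T x)) ->
  (forall l : 'I_N, Mset (row l X)) ->
  (forall l : 'I_N, row l Y = T (row l X)) ->
  (* D(X), D(Y) have full column rank *)
  \rank (dict_mx d X) = Nd -> \rank (dict_mx d Y) = Nd ->
  (* agent i holds the snapshot pairs indexed by the subset idx i *)
  (forall i : 'I_M, injective (idx i)) ->
  (* the rows of the local snapshots cover the rows of [D(X), D(Y)] *)
  (forall l : 'I_N, exists (i : 'I_M) (r : 'I_(Ni i)),
      row r (row_mx (dict_rows d X (idx i)) (dict_rows d Y (idx i)))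
      = row l (row_mx (dict_mx d X) (dict_mx d Y))) ->
  (* signature matrices: full column rank, rows contained in every agent's data *)
  \rank DXs = Nd -> \rank DYs = Nd ->
  (forall (i : 'I_M) (r : 'I_Ns), exists r' : 'I_(Ni i),
      row r' (row_mx (dict_rows d X (idx i)) (dict_rows d Y (idx i)))
      = row r (row_mx DXs DYs)) ->
  (* P-SSD execution: C k i = C_k^i, with C_0^i = I *)
  (forall i : 'I_M, C 0%N i = existT (fun c => 'M[R]_(Nd, c)) Nd 1%:M) ->
  (forall (k : nat) (i : 'I_M),
      PSSD_step (dict_rows d X (idx i)) (dict_rows d Y (idx i)) (G k.+1) (C k) i
        (C k.+1 i)) ->
  (* conclusion, at iteration k+1 *)
  forall (k : nat) (i j : 'I_M), (j == i) || G k.+1 j i ->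
    range_sub (projT2 (C k.+1 i)) (projT2 (C k j)).
Proof.
move=> _ _ _ _ _ _ _ _ rankDYs signature _ step k i j ij.
have freeDYi : col_free (dict_rows d Y (idx i)).
  apply: (@col_free_of_rows _ _ _ _ _ DYs); last by rewrite col_free_rank rankDYs.
  move=> r; have [r' rowr'] := signature i r; exists r'.
  by move: rowr'; rewrite !row_row_mx => /eq_row_mx [].
exact: PSSD_step_range_sub freeDYi (step k i) ij.
Qed.
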